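(* Let $\mathcal{B}\subseteq\mathcal{P}(X)$ be a countable admissible algebra and let $\mathcal{D}\subseteq\mathcal{B}$. Then there is a set $A\subseteq X$ such that: (i) the algebra generated by $\mathcal{B}\cup\{A\}$ is admissible; (ii) for every $D\in\mathcal{D}$ we have $D_{|n}\subseteq A_{|n}$ for all but finitely many $n\in\omega$; (iii) $\mu(A)\le\sum_{D\in\mathcal{D}}\mu(D)$.
   Context: $\omega=\{0,1,2,\dots\}$, $2^\omega$ is the Cantor set, $\lambda$ is the usual product probability measure on $2^\omega$, and $\mathrm{Clop}(2^\omega)$ is the algebra of clopen subsets of $2^\omega$. Let $X=\omega\times 2^\omega$. For $B\subseteq X$ and $n\in\omega$, $B_{|n}=\{t\in 2^\omega:(n,t)\in B\}$. A set $B\subseteq X$ is admissible if $B_{|n}\in\mathrm{Clop}(2^\omega)$ for all $n\in\omega$ and $\lim_n\lambda(B_{|n})$ exists; in that case $\mu(B):=\lim_n\lambda(B_{|n})$. An algebra of subsets of $X$ is admissible if all its elements are admissible. *)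

From HB Require Import structures.
From mathcomp Require Import all_boot all_order all_algebra.
From mathcomp Require Import all_classical all_reals all_analysis.
Set Implicit Arguments. Unset Strict Implicit. Unset Printing Implicit Defensive.
Import Order.TTheory GRing.Theory Num.Theory.
Import numFieldTopology.Exports numFieldNormedType.Exports.
Local Open Scope classical_set_scope.
Local Open Scope ring_scope.

Notation Cantor := cantor_space.

Definition X : Type := (nat * Cantor)%type.

Definition Clop (C : set Cantor) : Prop := clopen C.

Definition cyl (s : seq bool) : set Cantor :=
  [set t | forall i, (i < size s)%N -> t i = nth false s i].

(* lambda, the usual product (coin-tossing) probability measure on 2^omega,
   evaluated on a set C as its inner content by cylinders:
   sup_n (#{s in 2^n | [s] subset C}) / 2^n.  For clopen C (the only sets on
   which lambda is used below) this is exactly the product measure of C,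
   since a clopen set is a finite union of cylinders of some common length n
   and each cylinder of length n has measure 2^-n. *)
Definition level_count (n : nat) (C : set Cantor) : nat :=
  (\sum_(s : n.-tuple bool) (`[< cyl s `<=` C >] : nat))%N.

Definition lam {R : realType} (C : set Cantor) : R :=
  sup [set ((level_count n C)%:R / 2%:R ^+ n : R) | n in [set: nat]].

Definition section (B : set X) (n : nat) : set Cantor := [set t | B (n, t)].

Definition admissible {R : realType} (B : set X) : Prop :=
  (forall n, Clop (section B n)) /\
  cvgn (fun n => (lam (section B n) : R)).

Definition mu {R : realType} (B : set X) : R :=
  limn (fun n => (lam (section B n) : R)).

Definition is_algebra (F : set (set X)) : Prop :=
  [/\ F set0,
      (forall A, F A -> F (~` A)) &
      (forall A B, F A -> F B -> F (A `|` B))].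

Definition admissible_algebra {R : realType} (F : set (set X)) : Prop :=
  is_algebra F /\ (forall B, F B -> @admissible R B).

Definition gen_algebra (G : set (set X)) : set (set X) :=
  [set A | forall F, is_algebra F -> G `<=` F -> F A].

From HB Require Import structures.
From mathcomp Require Import all_boot all_order all_algebra.
From mathcomp Require Import all_classical all_reals all_analysis.
Import Order.TTheory GRing.Theory Num.Theory.
Import numFieldTopology.Exports numFieldNormedType.Exports.
Local Open Scope classical_set_scope.
Local Open Scope ring_scope.

(* Enumerate B as (e i) and let U k be the union of the members of D among
   e 0, ..., e k.-1: every member of D is eventually below U k, and mu (U k) is
   bounded by the sum over D.  A is glued from sections of the U k,
   A_{|n} = (U (f n))_{|n}, with f tending to infinity so slowly that, for each
   i, lam ((U (f n) `&` e i)_{|n}) stays close to mu (U (f n) `&` e i), which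
   increases to a limit; so every A `&` C with C in B is admissible and
   mu A = lim mu (U k).  This suffices for the generated algebra, whose members
   are (A `&` C1) `|` (~` A `&` C2) with C1, C2 in B, because lam is additive on
   disjoint clopen sets. *)

Definition agree (t : Cantor) (m : nat) : set Cantor :=
  [set u | forall i, (i < m)%N -> u i = t i].

Lemma open_agree t m : open (agree t m).
Proof.
elim: m => [|m IH].
  rewrite (_ : agree t 0 = setT); first exact: openT.
  by rewrite predeqE => u; split => // _ i; rewrite ltn0.
rewrite (_ : agree t m.+1 = agree t m `&` (proj m @^-1` [set t m])).
  apply: openI => //.
  by apply: open_comp; [move=> + _; exact: proj_continuous | exact: discrete_open].
rewrite predeqE => u; split.
  by move=> H; split; [move=> i Hi; apply: H; exact: ltnW | apply: H].
by move=> [H1 H2] i; rewrite ltnS leq_eqVlt => /predU1P[->//|]; exact: H1.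
Qed.

Lemma open_agree_sub {C : set Cantor} {t : Cantor} : open C -> C t ->
  exists m, agree t m `<=` C.
Proof.
move=> oC Ct.
have agree_filter : Filter (filter_from [set: nat] (agree t)).
  apply: filter_from_filter; first by exists 0%N.
  move=> i j _ _; exists (maxn i j) => //= u Hu.
  by split=> k Hk; apply: Hu; rewrite leq_max Hk ?orbT.
have : filter_from [set: nat] (agree t) --> t.
  apply/cvg_sup => i A /=.
  rewrite (@nbhsE (initial_topology (fun f : Cantor => f i))).
  move=> [B [[B0 oB0 <-] Bt] BA].
  by exists i.+1 => // u Hu; apply: BA; rewrite /= Hu.
by move/(_ C (open_nbhs_nbhs (conj oC Ct))) => [m _ Hm]; exists m.
Qed.

Definition zero_ext (s : seq bool) : Cantor := fun i => nth false s i.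

Lemma cyl_zero_ext s : cyl s (zero_ext s). Proof. by []. Qed.

Definition determined_at (M : nat) (C : set Cantor) :=
  forall s : seq bool, (M <= size s)%N -> cyl s `<=` C \/ cyl s `<=` ~` C.

Lemma clopen_determined (C : set Cantor) : Clop C -> exists M, determined_at M C.
Proof.
move=> [oC cC].
have agree_decides t : exists m, agree t m `<=` C \/ agree t m `<=` ~` C.
  have [Ct|nCt] := pselect (C t).
    by have [m Hm] := open_agree_sub oC Ct; exists m; left.
  by have [m Hm] := open_agree_sub (closed_openC cC) nCt; exists m; right.
pose m t := projT1 (cid (agree_decides t)).
have mP t : agree t (m t) `<=` C \/ agree t (m t) `<=` ~` C :=
  projT2 (cid (agree_decides t)).
have := cantor_space_compact; rewrite compact_cover.
move=> /(_ Cantor setT (fun t => agree t (m t))) [t _|t _|T' _ cover].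
- exact: open_agree.
- by exists t => // i.
exists (\max_(t <- finmap.enum_fset T') m t) => s Hs.
have [t T't Ht] := cover (zero_ext s) I.
have mt_le : (m t <= size s)%N.
  by apply: leq_trans Hs; rewrite (big_rem t) //= leq_maxl.
have cyl_agree : cyl s `<=` agree t (m t).
  by move=> u Hu i Hi; rewrite -(Ht i Hi); exact: Hu (leq_trans Hi mt_le).
by case: (mP t) => H; [left | right]; exact: subset_trans cyl_agree H.
Qed.

Lemma determined_at_le {M N C} : (M <= N)%N -> determined_at M C -> determined_at N C.
Proof. by move=> MN dC s Ns; apply: dC; exact: leq_trans Ns. Qed.

Lemma determined_atU {M P Q} :
  determined_at M P -> determined_at M Q -> determined_at M (P `|` Q).
Proof.
move=> dP dQ s Ms; case: (dP s Ms) => HP; first by left=> u /HP; left.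
case: (dQ s Ms) => HQ; first by left=> u /HQ; right.
by right=> u Hu [/(HP _ Hu)|/(HQ _ Hu)].
Qed.

Lemma determined_cyl {M C} {s : seq bool} {u : Cantor} :
  determined_at M C -> (M <= size s)%N -> cyl s u -> C u = C (zero_ext s).
Proof.
move=> dC Ms su; apply/propext.
case: (dC s Ms) => H; split=> Cu.
- exact: H (cyl_zero_ext s).
- exact: H su.
- by case: (H _ su).
- by case: (H _ (cyl_zero_ext s)).
Qed.

Lemma sum_tuple_rcons n (F : n.+1.-tuple bool -> nat) :
  (\sum_(t : n.+1.-tuple bool) F t =
   \sum_(s : n.-tuple bool) (F [tuple of rcons s true] + F [tuple of rcons s false]))%N.
Proof.
pose h := fun p : n.-tuple bool * bool => [tuple of rcons p.1 p.2].
have h_inj : injective h.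
  by move=> [s b] [s' b'] /(congr1 val) /= /rcons_inj [] /val_inj -> ->.
have h_bij : bijective h.
  by apply: inj_card_bij => //; rewrite card_prod !card_tuple card_bool expnS mulnC.
rewrite (reindex h); last exact: onW_bij.
rewrite -(pair_big xpredT xpredT (fun s b => F (h (s, b)))) /=.
by apply: eq_bigr => s _; rewrite big_bool.
Qed.

Lemma level_count_le n C : (level_count n C <= 2 ^ n)%N.
Proof.
apply: (@leq_trans (\sum_(s : n.-tuple bool) 1)%N).
  by apply: leq_sum => s _; case: asboolP.
by rewrite sum1_card card_tuple card_bool.
Qed.

Lemma le_level_count n (C C' : set Cantor) : C `<=` C' ->
  (level_count n C <= level_count n C')%N.
Proof.
move=> CC'; apply: leq_sum => s _.
by case: asboolP => // sC; rewrite asboolT //; exact: subset_trans sC CC'.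
Qed.

Lemma cyl_rcons (s : seq bool) b : cyl (rcons s b) `<=` cyl s.
Proof. by move=> u Hu i Hi; rewrite Hu ?size_rcons ?(ltn_trans Hi) // nth_rcons Hi. Qed.

Lemma cyl_zero_ext_rcons (s : seq bool) b : cyl s (zero_ext (rcons s b)).
Proof. by move=> i Hi; rewrite /zero_ext nth_rcons Hi. Qed.

Lemma level_count_S n C : (2 * level_count n C <= level_count n.+1 C)%N.
Proof.
rewrite /level_count sum_tuple_rcons mul2n -addnn -big_split /=.
apply: leq_sum => s _; case: asboolP => //= sC.
by rewrite !(asboolT (subset_trans (cyl_rcons _ _) sC)).
Qed.

Lemma level_count_determined n C : determined_at n C ->
  level_count n C = (\sum_(s : n.-tuple bool) `[< C (zero_ext s) >])%N.
Proof.
move=> dC; apply: eq_bigr => s _.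
have ns : (n <= size s)%N by rewrite size_tuple.
case: (dC s ns) => sC.
  by rewrite !asboolT //; exact: sC.
have nCs : ~ C (zero_ext s) by exact: sC (cyl_zero_ext s).
by rewrite !asboolF // => /(_ _ (cyl_zero_ext s)).
Qed.

Lemma level_count_S_determined n C : determined_at n C ->
  level_count n.+1 C = (2 * level_count n C)%N.
Proof.
move=> dC; rewrite !level_count_determined //; last exact: determined_at_le dC.
rewrite sum_tuple_rcons mul2n -addnn -big_split /=; apply: eq_bigr => s _.
have ns : (n <= size s)%N by rewrite size_tuple.
by rewrite !(determined_cyl dC ns (cyl_zero_ext_rcons _ _)).
Qed.

Lemma level_count_setU {n P Q} : determined_at n P -> determined_at n Q ->
  P `&` Q = set0 -> level_count n (P `|` Q) = (level_count n P + level_count n Q)%N.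
Proof.
move=> dP dQ PQ0; have dPQ := determined_atU dP dQ.
rewrite !level_count_determined // -big_split.
apply: eq_bigr => s _ /=.
case: (asboolP (P _)) => Ps; case: (asboolP (Q _)) => Qs.
- by have : (P `&` Q) (zero_ext s) by []; rewrite PQ0.
- by rewrite asboolT //; left.
- by rewrite asboolT //; right.
- by rewrite asboolF // => -[].
Qed.

Section inner_content.
Variable R : realType.

Definition level_ratio n C : R := (level_count n C)%:R / 2%:R ^+ n.

Lemma level_ratio_le1 n C : level_ratio n C <= 1.
Proof.
by rewrite ler_pdivrMr ?exprn_gt0 // mul1r -natrX ler_nat level_count_le.
Qed.

Lemma le_level_ratio n (C C' : set Cantor) : C `<=` C' ->
  level_ratio n C <= level_ratio n C'.
Proof.
by move=> CC'; rewrite ler_pM2r ?invr_gt0 ?exprn_gt0 // ler_nat le_level_count.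
Qed.

Lemma level_ratio_nondecreasing C :
  {homo level_ratio ^~ C : n m / (n <= m)%N >-> n <= m}.
Proof.
apply/nondecreasing_seqP => n.
rewrite /level_ratio exprS invfM mulrA ler_pM2r ?invr_gt0 ?exprn_gt0 //.
by rewrite ler_pdivlMr // -natrM ler_nat mulnC level_count_S.
Qed.

Lemma level_ratio_determined {n m : nat} {C} : determined_at n C -> (n <= m)%N ->
  level_ratio m C = level_ratio n C.
Proof.
move=> dC /subnK <-; elim: (m - n)%N => [|k IH] //.
rewrite addSn /level_ratio level_count_S_determined; last first.
  by apply: determined_at_le dC; rewrite leq_addl.
by rewrite natrM exprS invfM mulrA -[2 * _]mulrC mulfK.
Qed.

Lemma has_sup_level_ratio C : has_sup [set level_ratio n C | n in [set: nat]].
Proof.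
split; first by exists (level_ratio 0 C), 0%N.
by exists 1 => _ [n _ <-]; exact: level_ratio_le1.
Qed.

Lemma level_ratio_le_lam n C : level_ratio n C <= lam C.
Proof. by apply: sup_upper_bound; [exact: has_sup_level_ratio | exists n]. Qed.

Lemma ge_lam C (r : R) : (forall n, level_ratio n C <= r) -> lam C <= r.
Proof.
move=> Cr; apply: ge_sup; first by exists (level_ratio 0 C), 0%N.
by move=> _ [n _ <-]; exact: Cr.
Qed.

Lemma lam_determined {n : nat} {C} : determined_at n C -> lam C = level_ratio n C.
Proof.
move=> dC; apply/eqP; rewrite eq_le level_ratio_le_lam andbT; apply: ge_lam => k.
rewrite -(level_ratio_determined dC (leq_maxr k n)).
by apply: level_ratio_nondecreasing; exact: leq_maxl.
Qed.

Lemma le_lam (C C' : set Cantor) : C `<=` C' -> lam C <= lam C' :> R.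
Proof.
move=> CC'; apply: ge_lam => n.
by apply: le_trans (level_ratio_le_lam n C'); exact: le_level_ratio.
Qed.

Lemma lam0 : lam set0 = 0 :> R.
Proof.
have d0 : determined_at 0 set0 by move=> s _; right=> u _ [].
rewrite (lam_determined d0) /level_ratio level_count_determined // big1 ?mul0r //.
by move=> s _; rewrite asboolF.
Qed.

Lemma lam_setU (P Q : set Cantor) : Clop P -> Clop Q -> P `&` Q = set0 ->
  lam (P `|` Q) = lam P + lam Q :> R.
Proof.
move=> /clopen_determined[M dP] /clopen_determined[N dQ] PQ0.
have {}dP := determined_at_le (leq_maxl M N) dP.
have {}dQ := determined_at_le (leq_maxr M N) dQ.
rewrite !(lam_determined (determined_atU dP dQ), lam_determined dP, lam_determined dQ).
by rewrite /level_ratio (level_count_setU dP dQ PQ0) natrD mulrDl.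
Qed.

Lemma lam_setU_le (P Q : set Cantor) : Clop P -> Clop Q ->
  lam (P `|` Q) <= lam P + lam Q :> R.
Proof.
move=> cP cQ; have -> : P `|` Q = P `|` (Q `\` P) by rewrite setUDr setDv setD0.
rewrite lam_setU ?setDIK //; last by rewrite setDE; apply: clopenI => //; exact: clopenC.
by rewrite lerD2l; apply: le_lam; exact: subDsetl.
Qed.

End inner_content.

Section measure_of_admissible.
Context {R : realType}.

Lemma le_mu {W W' : set X} : @admissible R W -> @admissible R W' -> W `<=` W' ->
  mu W <= mu W' :> R.
Proof.
move=> [_ cW] [_ cW'] WW'; apply: ler_lim => //; apply: nearW => n.
by apply: le_lam => t; exact: WW'.
Qed.

Lemma mu_setU_le {W W' : set X} : @admissible R W -> @admissible R W' ->
  @admissible R (W `|` W') -> mu (W `|` W') <= mu W + mu W' :> R.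
Proof.
move=> [clW cW] [clW' cW'] [_ cWW'].
rewrite /mu -limD //; apply: ler_lim => //; first exact: is_cvgD.
by apply: nearW => n /=; apply: lam_setU_le; [exact: clW | exact: clW'].
Qed.

Lemma cvgn_mu_nondecreasing (V : nat -> set X) (W : set X) :
  (forall k, @admissible R (V k)) -> @admissible R W -> (forall k, V k `<=` W) ->
  {homo V : k m / (k <= m)%N >-> k `<=` m} -> cvgn (fun k => mu (V k) : R).
Proof.
move=> admV admW VW V_mono; apply: nondecreasing_is_cvgn.
  by move=> k m km; apply: le_mu => //; exact: V_mono.
by exists (mu W) => _ [k _ <-]; exact: le_mu.
Qed.

Lemma mu0 : mu set0 = 0 :> R.
Proof.
rewrite /mu (_ : (fun n => lam (section set0 n)) = fun _ => 0) ?lim_cst //.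
by apply: funext => n; rewrite -(lam0 R); congr lam; rewrite predeqE.
Qed.

End measure_of_admissible.

Section algebra.
Context {F : set (set X)} (algF : is_algebra F).

Lemma algebraI {P Q : set X} : F P -> F Q -> F (P `&` Q).
Proof.
have [_ FC FU] := algF; move=> FP FQ.
by rewrite -[P `&` Q]setCK setCI; apply: (FC); apply: FU; apply: (FC).
Qed.

Lemma algebraT : F setT.
Proof. by have [F0 FC _] := algF; rewrite -setC0; exact: FC. Qed.

Lemma algebra_big_setU {s : seq (set X)} : (forall C, C \in s -> F C) ->
  F (\big[setU/set0]_(C <- s) C).
Proof.
have [F0 _ FU] := algF; elim: s => [|C s IH] Fs; first by rewrite big_nil.
rewrite big_cons; apply: FU; first by apply: Fs; exact: mem_head.
by apply: IH => D Ds; apply: Fs; rewrite inE Ds orbT.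
Qed.

End algebra.

Lemma is_algebra_gen_algebra (G : set (set X)) : is_algebra (gen_algebra G).
Proof.
split.
- by move=> F [F0 _ _] _.
- by move=> W GW F algF GF; case: (algF) => _ FC _; apply: FC; exact: GW.
- move=> W W' GW GW' F algF GF; case: (algF) => _ _ FU.
  by apply: FU; [exact: GW | exact: GW'].
Qed.

Definition patch (A : set X) (B : set (set X)) : set (set X) :=
  [set W | exists C1 C2, [/\ B C1, B C2 & W = (A `&` C1) `|` (~` A `&` C2)]].

Lemma is_algebra_patch (A : set X) {B : set (set X)} : is_algebra B ->
  is_algebra (patch A B).
Proof.
move=> algB; have [B0 BC BU] := algB; split.
- by exists set0, set0; rewrite !setI0 setU0.
- move=> _ [C1 [C2 [BC1 BC2 ->]]].
  exists (~` C1), (~` C2); split; [exact: BC | exact: BC |].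
  by rewrite predeqE => x /=; have [Ax|nAx] := pselect (A x); tauto.
- move=> _ _ [C1 [C2 [BC1 BC2 ->]]] [C1' [C2' [BC1' BC2' ->]]].
  exists (C1 `|` C1'), (C2 `|` C2'); split; [exact: BU | exact: BU |].
  by rewrite !setIUr setUACA.
Qed.

Lemma gen_algebra_setU1_sub (A : set X) {B : set (set X)} : is_algebra B ->
  gen_algebra (B `|` [set A]) `<=` patch A B.
Proof.
move=> algB W; apply; first exact: is_algebra_patch.
move=> C [BC | ->].
- by exists C, C; rewrite -setIUl setUv setTI.
- exists setT, set0; rewrite setIT setI0 setU0; split => //; first exact: algebraT.
  by case: algB.
Qed.

Lemma admissible_algebra_setU1 (R : realType) (B : set (set X)) (A : set X) :
  @admissible_algebra R B -> (forall C, B C -> @admissible R (A `&` C)) ->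
  @admissible_algebra R (gen_algebra (B `|` [set A])).
Proof.
move=> [algB admB] admAB; split; first exact: is_algebra_gen_algebra.
move=> _ /(gen_algebra_setU1_sub A algB) [C1 [C2 [BC1 BC2 ->]]].
have [clA1 cvA1] := admAB _ BC1.
have [clA2 cvA2] := admAB _ BC2.
have [clC2 cvC2] := admB _ BC2.
have clD n : Clop (section (~` A `&` C2) n).
  have -> : section (~` A `&` C2) n = section C2 n `&` ~` section (A `&` C2) n.
    rewrite predeqE => t; split=> [[nAt C2t]|[C2t nAC2t]].
      by split=> // -[].
    by split=> // At; exact: nAC2t.
  by apply: clopenI; [exact: clC2 | exact: (clopenC set0 (clA2 n))].
have disj (C C' : set X) n : section (A `&` C) n `&` section (~` A `&` C') n = set0.
  by rewrite predeqE => t; split => // -[[At _] [/(_ At)]].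
have lamC2 n : lam (section C2 n) =
    lam (section (~` A `&` C2) n) + lam (section (A `&` C2) n) :> R.
  rewrite -lam_setU; [|exact: clD|exact: clA2|by rewrite setIC disj].
  congr lam; rewrite predeqE => t; split=> [C2t|[[]|[]] //].
  by have [At|nAt] := pselect (A (n, t)); [right | left].
have lamW n : lam (section ((A `&` C1) `|` (~` A `&` C2)) n) =
    lam (section (A `&` C1) n) + (lam (section C2 n) - lam (section (A `&` C2) n)) :> R.
  by rewrite lamC2 addrK; apply: lam_setU; [exact: clA1 | exact: clD | exact: disj].
split; first by move=> n; apply: clopenU; [exact: clA1 | exact: clD].
by rewrite (funext lamW); apply: is_cvgD => //; exact: is_cvgB.
Qed.

Lemma mu_big_setU_le {R : realType} {B : set (set X)} {s : seq (set X)} :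
  @admissible_algebra R B -> (forall C, C \in s -> B C) ->
  mu (\big[setU/set0]_(C <- s) C) <= \sum_(C <- s) mu C :> R.
Proof.
move=> [algB admB]; elim: s => [|C s IH] Bs; first by rewrite !big_nil mu0.
have BC : B C by apply: Bs; exact: mem_head.
have {}Bs D : D \in s -> B D by move=> Ds; apply: Bs; rewrite inE Ds orbT.
have Bbig := algebra_big_setU algB Bs.
rewrite !big_cons; apply: le_trans (mu_setU_le (admB _ BC) (admB _ Bbig) _) _.
  by apply: admB; case: algB => _ _; apply.
by rewrite lerD2l; exact: IH.
Qed.

Lemma exhausting_sequence {R : realType} {B D : set (set X)} {e : nat -> set X} :
  @admissible_algebra R B -> D `<=` B -> D `<=` range e ->
  exists U : nat -> set X,
    [/\ forall k, B (U k), {homo U : k m / (k <= m)%N >-> k `<=` m},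
        forall Dd, D Dd -> exists k, Dd `<=` U k &
        forall k, ((mu (U k) : R)%:E <= \esum_(Dd in D) (mu Dd)%:E)%E].
Proof.
move=> admB DB De.
pose s k := [seq e i | i <- iota 0 k & `[< D (e i) >]].
have sD k C : C \in s k -> D C.
  by move=> /mapP[i]; rewrite mem_filter => /andP[/asboolP Dei _] ->.
have sB k C : C \in s k -> B C by move/sD; exact: DB.
exists (fun k => \big[setU/set0]_(C <- s k) C); split.
- by move=> k; apply: algebra_big_setU (sB k); case: admB.
- move=> k m /subnKC <-.
  by rewrite /s iotaD filter_cat map_cat big_cat /=; exact: subsetUl.
- move=> _ /[dup] /De [j _ <-] Dej; exists j.+1.
  have ej : e j \in s j.+1.
    by apply: map_f; rewrite mem_filter mem_iota add0n ltnSn andbT leq0n asboolT.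
  by rewrite (big_rem _ ej); exact: subsetUl.
- move=> k; apply: esum_ge; exists [set` undup (s k)].
    by split=> [|C /=]; [exact: finite_seq | rewrite mem_undup; exact: sD].
  rewrite -fsbig_seq ?undup_uniq // sumEFin lee_fin -(big_undup _ _ _ (@setUid _)).
  by apply: mu_big_setU_le admB _ => C; rewrite mem_undup; exact: sB.
Qed.

Lemma slowly_divergent (M : nat -> nat) :
  exists f : nat -> nat,
    f n @[n --> \oo] --> \oo /\ \forall n \near \oo, (M (f n) <= n)%N.
Proof.
pose fix f n :=
  if n is m.+1 then if (M (f m).+1 <= m.+1)%N then (f m).+1 else f m else 0%N.
have fS n : (f n <= f n.+1)%N by rewrite /=; case: ifP.
exists f; split.
  suff f_ge K : \forall n \near \oo, (K <= f n)%N.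
    by move=> P [K _ PK]; apply: filterS (f_ge K) => n /PK.
  elim: K => [|K [n0 _ fK]]; first by exists 0%N.
  exists (maxn n0 (M K.+1)).+1 => // -[//|n] /=.
  rewrite ltnS geq_max => /andP[n0n MKn].
  have := fK _ n0n; rewrite leq_eqVlt => /predU1P[fnK|]; last first.
    by move/leq_trans; apply; exact: fS.
  by rewrite /= -fnK (leqW MKn).
exists (M 0) => // n /= Mn.
suff fM : (M (f n) <= maxn (M 0) n)%N.
  by apply: leq_trans fM _; rewrite geq_max Mn leqnn.
elim: n {Mn} => [|n IH] /=; first by rewrite leq_maxl.
case: ifP => [MfS|_]; first by rewrite (leq_trans MfS) ?leq_maxr.
by rewrite (leq_trans IH) // geq_max leq_maxl (leq_trans (leqnSn n)) ?leq_maxr.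
Qed.

Lemma cvg_diagonal {R : realType} {u : nat -> nat -> nat -> R} {l : nat -> nat -> R} :
  (forall i k, u i k n @[n --> \oo] --> l i k) -> (forall i, cvgn (l i)) ->
  exists f : nat -> nat, f n @[n --> \oo] --> \oo /\
    forall i, u i (f n) n @[n --> \oo] --> limn (l i).
Proof.
move=> cvg_u cvg_l.
have N_ex i k : exists N, forall n, (N <= n)%N -> `|l i k - u i k n| < k.+1%:R^-1.
  have k0 : 0 < k.+1%:R^-1 :> R by rewrite invr_gt0.
  have /cvgrPdist_lt/(_ _ k0)[N _ HN] := cvg_u i k.
  by exists N.
pose N i k := projT1 (cid (N_ex i k)).
have NP i k : forall n, (N i k <= n)%N -> _ := projT2 (cid (N_ex i k)).
(* f only reaches k once every u j k with j < k is 1/(k+1)-close to l j k. *)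
have [f [f_oo fM]] := slowly_divergent (fun k => \max_(i < k) N i k)%N.
exists f; split=> // i; apply/cvgrPdist_lt => eps eps0.
have eps20 : 0 < eps / 2 by rewrite divr_gt0.
have /cvgrPdist_lt/(_ _ eps20) cvg_li := cvg_l i.
near=> n.
have lim_close : `|limn (l i) - l i (f n)| < eps / 2 by near: n; exact: f_oo _ cvg_li.
have fn_large : (f n).+1%:R^-1 < eps / 2.
  by near: n; exact: f_oo _ (near_infty_natSinv_lt (PosNum eps20)).
have ifn : (i < f n)%N by near: n; exact: f_oo _ (nbhs_infty_gt i).
have N_le : (N i (f n) <= n)%N.
  apply: leq_trans (@leq_bigmax _ (fun j : 'I_(f n) => N j (f n)) (Ordinal ifn)) _.
  by near: n.
rewrite (splitr eps) (le_lt_trans (ler_distD (l i (f n)) _ _)) // ltrD //.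
exact: lt_trans (NP i (f n) _ N_le) fn_large.
Unshelve. all: by end_near.
Qed.

Lemma limn_EFin_le (R : realFieldType) (u : nat -> R) (S : \bar R) :
  cvgn u -> (forall k, (u k)%:E <= S)%E -> ((limn u)%:E <= S)%E.
Proof.
move=> cu; case: S => [r | | ] uS.
- by rewrite lee_fin; apply: limr_le => //; apply: nearW => k; rewrite -lee_fin.
- exact: leey.
- by have := uS 0%N.
Qed.

Lemma countable_range {T : Type} {A : set T} : A !=set0 -> countable A ->
  exists e : nat -> T, A = range e.
Proof.
by move=> [a Aa] /pfcard_geP[A0|/surjfunPex//]; move: Aa; rewrite A0.
Qed.

Theorem lemma2p4 (R : realType) (B D : set (set X)) :
  countable B -> @admissible_algebra R B -> D `<=` B ->
  exists A : set X,
    [/\ @admissible_algebra R (gen_algebra (B `|` [set A])),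
        (forall Dd, D Dd -> exists N, forall n, (N <= n)%N ->
           section Dd n `<=` section A n) &
        ((@mu R A)%:E <= \esum_(Dd in D) (@mu R Dd)%:E)%E].
Proof.
move=> cB admB DB; have [algB admBs] := admB; have [B0 _ _] := algB.
have [e Be] := countable_range (ex_intro B set0 B0) cB.
have eB i : B (e i) by rewrite Be; exists i.
have De : D `<=` range e by rewrite -Be.
have [U [BU U_mono DU muU]] := exhausting_sequence admB DB De.
have BUe k i : B (U k `&` e i) := algebraI algB (BU k) (eB i).
have cvg_l i : cvgn (fun k => mu (U k `&` e i) : R).
  apply: (cvgn_mu_nondecreasing _ (e i)) => [k||k|k m km].
  - exact: admBs.
  - exact: admBs.
  - exact: subIsetr.
  - exact: setSI (U_mono _ _ km).
have [f [f_oo cvg_uf]] := cvg_diagonal (fun i k => (admBs _ (BUe k i)).2) cvg_l.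
pose A : set X := [set x | U (f x.1) x].
exists A; split.
- apply: admissible_algebra_setU1 => // C; rewrite Be => -[i _ <-].
  split; first by move=> n; exact: (admBs _ (BUe (f n) i)).1.
  exact: cvgP (cvg_uf i).
- move=> Dd /DU[k Dk]; have [N _ Nk] := f_oo _ (nbhs_infty_ge k).
  by exists N => n /Nk kfn t /Dk; exact: U_mono kfn _.
- have [iT _ eT] : range e setT by rewrite -Be; exact: algebraT.
  have -> : mu A = limn (fun k => mu (U k `&` e iT) : R).
    by rewrite -[A]setIT -eT; apply: cvg_lim => //; exact: cvg_uf.
  by apply: limn_EFin_le (cvg_l iT) _ => k; rewrite eT setIT.
Qed.
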